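(* Let $N_1,\dots,N_d$ be positive integers. For any integer $s\ge2$ and any $X\subseteq[N_1]\times\cdots\times[N_d]$, \[ \sum_{\mathbf{b}\in\mathbb{Z}^d\setminus\{\mathbf{0}\}}|U^d(X,\mathbf{b},s)|\le|X|\prod_{i=1}^d\Big(4\frac{N_i}{s}+1\Big). \]
   Context: $[N]=\{1,\dots,N\}$. For $\mathbf{b}\in\mathbb{Z}^d\setminus\{\mathbf{0}\}$, points $\mathbf{x},\mathbf{x}'$ are congruent mod $\mathbf{b}$ if $\mathbf{x}-\mathbf{x}'\in\mathbb{Z}\mathbf{b}$. $U^d(X,\mathbf{b},s)$ is the set of $\mathbf{x}\in X$ such that $|\{\mathbf{x}'\in X:\mathbf{x}'\equiv\mathbf{x}\pmod{\mathbf{b}}\}|\ge s$. *)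

From HB Require Import structures.
From mathcomp Require Import all_boot all_order all_algebra.
From mathcomp Require Import finmap.
From mathcomp Require Import boolp.
Set Implicit Arguments. Unset Strict Implicit. Unset Printing Implicit Defensive.
Import Order.TTheory GRing.Theory Num.Theory.
Local Open Scope ring_scope.
Local Open Scope fset_scope.

Definition congr_mod (d : nat) (b x x' : 'rV[int]_d) : Prop :=
  exists k : int, x - x' = k *: b.

Definition U (d : nat) (X : {fset 'rV[int]_d}) (b : 'rV[int]_d) (s : nat)
  : {fset 'rV[int]_d} :=
  [fset x in X | (s <= #|` [fset x' in X | `[< congr_mod b x' x >]]|)%N].

Definition in_box (d : nat) (N : 'I_d -> nat) (X : {fset 'rV[int]_d}) : Prop :=
  forall x, x \in X -> forall i : 'I_d, (1 <= x 0 i)%R /\ (x 0 i <= (N i)%:Z)%R.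

From HB Require Import structures.
From mathcomp Require Import all_boot all_order all_algebra.
From mathcomp Require Import finmap.
From mathcomp Require Import boolp.
From mathcomp Require Import zify.
Set Implicit Arguments. Unset Strict Implicit. Unset Printing Implicit Defensive.
Import Order.TTheory GRing.Theory Num.Theory.
Local Open Scope fset_scope.
Local Open Scope ring_scope.

(* If x is in U(X, b, s), its congruence class mod b contains at least s
   points of X; when b_i <> 0 their i-th coordinates lie in [1, N_i] and are
   pairwise distinct and congruent mod |b_i|, so (s - 1)|b_i| <= N_i - 1.
   Hence only the vectors b with |b_i| <= (N_i - 1)/(s - 1) for all i
   contribute, each at most |X|, and there are at most
   prod_i (2 (N_i - 1)/(s - 1) + 1) <= prod_i (4 N_i/s + 1) of them. *)

Lemma card_eqmod_le (A : {fset nat}) (m L : nat) :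
  {in A, forall t, t <= L}%N -> {in A &, forall t u, t = u %[mod m]} ->
  (#|` A| <= (L %/ m).+1)%N.
Proof.
move=> A_le A_eqmod.
have div_inj : {in A &, injective (divn^~ m)}.
  move=> t u tA uA eq_div.
  by rewrite (divn_eq t m) (divn_eq u m) eq_div (A_eqmod t u tA uA).
move/card_in_imfsetP/eqP: div_inj => <-.
rewrite -[(_ %/ m).+1](size_iota 0).
apply: uniq_leq_size; first exact: fset_uniq.
by move=> _ /imfsetP[t tA ->]; rewrite mem_iota ltnS leq_div2r ?A_le.
Qed.

Lemma nat_eqmod_absz (u v : nat) (k b : int) :
  u%:Z = v%:Z + k * b -> u = v %[mod `|b|].
Proof.
move=> u_def; apply/eqP; rewrite -eqz_nat -!modz_nat !modz_abs u_def.
by rewrite addrC modzMDl.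
Qed.

Lemma uniq_box_size (d : nat) (M : 'I_d -> nat) (bs : seq 'rV[int]_d) :
  uniq bs -> {in bs, forall (b : 'rV[int]_d) i, `|b 0%R i| <= M i}%N ->
  (size bs <= \prod_(i < d) (M i).*2.+1)%N.
Proof.
move=> bs_uniq bs_box.
pose T := {dffun forall i : 'I_d, 'I_(M i).*2.+1}.
pose f (b : 'rV[int]_d) : T := [ffun i => inord `|b 0%R i + (M i)%:Z|].
have shift_lt b i : b \in bs -> (absz (b 0%R i + (M i)%:Z)%R < (M i).*2.+1)%N.
  by move/bs_box/(_ i); rewrite -mul2n; move: (b 0%R i) => t; lia.
have f_inj : {in bs &, injective f}.
  move=> b c bB cB /ffunP/(_ _)/(congr1 val) f_bc; apply/rowP => i.
  have := f_bc i; rewrite !ffunE /= !inordK ?shift_lt //.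
  by move: (bs_box b bB i) (bs_box c cB i); lia.
rewrite -(size_map f) -(card_uniqP _) ?map_inj_in_uniq //.
rewrite (leq_trans (max_card _)) // card_dep_ffun foldrE big_map big_enum /=.
by under eq_bigr do rewrite card_ord.
Qed.

Definition congr_class (d : nat) (X : {fset 'rV[int]_d}) (b x : 'rV[int]_d) :=
  [fset x' in X | `[< congr_mod b x' x >]].

Lemma in_U (d : nat) (X : {fset 'rV[int]_d}) b s x :
  (x \in U X b s) = (x \in X) && (s <= #|` congr_class X b x|)%N.
Proof. by rewrite !inE. Qed.

Lemma congr_class_sub (d : nat) (X : {fset 'rV[int]_d}) (b x : 'rV[int]_d) :
  congr_class X b x `<=` X.
Proof. by apply/fsubsetP => y; rewrite !inE => /andP[]. Qed.

Lemma congr_class_diff (d : nat) (X : {fset 'rV[int]_d}) (b x y z : 'rV_d) :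
  y \in congr_class X b x -> z \in congr_class X b x ->
  exists k : int, y = z + k *: b.
Proof.
rewrite !inE => /andP[_ /asboolP[k yx]] /andP[_ /asboolP[l zx]].
exists (k - l); rewrite scalerBl -yx -zx.
have -> : y - x - (z - x) = y - z by rewrite opprB addrA subrK.
by rewrite addrC subrK.
Qed.

Section CongruenceClass.

Variables (d : nat) (N : 'I_d -> nat) (X : {fset 'rV[int]_d}).
Hypothesis X_box : in_box N X.

Lemma card_congr_class_le (b x : 'rV[int]_d) (i : 'I_d) :
  b 0 i != 0 -> (#|` congr_class X b x| <= ((N i).-1 %/ `|b 0%R i|).+1)%N.
Proof.
move=> bi_neq0; set S := congr_class X b x.
pose f (y : 'rV[int]_d) := absz (y 0%R i - 1).
have f_coord y : y \in S -> (f y)%:Z = y 0 i - 1 /\ (f y <= (N i).-1)%N.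
  move/(fsubsetP (congr_class_sub X b x))/X_box/(_ i) => [y_ge1 y_leN].
  rewrite /f -subn1; move: (y 0 i) y_ge1 y_leN => t; lia.
have f_diff y z : y \in S -> z \in S ->
    exists k : int, y = z + k *: b /\ (f y)%:Z = (f z)%:Z + k * b 0 i.
  move=> yS zS; have [k y_def] := congr_class_diff yS zS.
  exists k; split=> //; rewrite (f_coord y yS).1 (f_coord z zS).1 y_def !mxE.
  by rewrite addrAC.
have f_inj : {in S &, injective f}.
  move=> y z yS zS /(congr1 Posz); have [k [y_def ->]] := f_diff y z yS zS.
  move/(canRL (addKr _)); rewrite addNr => /eqP.
  rewrite mulf_eq0 (negbTE bi_neq0) orbF => /eqP k0.
  by rewrite y_def k0 scale0r addr0.
move/card_in_imfsetP/eqP: f_inj => <-; apply: card_eqmod_le.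
  by move=> _ /imfsetP[y yS ->]; exact: (f_coord y yS).2.
move=> _ _ /imfsetP[y yS ->] /imfsetP[z zS ->].
by have [k [_ fy]] := f_diff y z yS zS; exact: nat_eqmod_absz fy.
Qed.

Lemma U_coord_le (b x : 'rV[int]_d) (s : nat) (i : 'I_d) :
  (1 < s)%N -> x \in U X b s -> (`|b 0%R i| <= (N i).-1 %/ s.-1)%N.
Proof.
move=> s_gt1; rewrite in_U => /andP[_ s_le].
have [-> //|bi_neq0] := eqVneq (b 0 i) 0.
have := leq_trans s_le (card_congr_class_le x bi_neq0).
rewrite -[s in (s <= _)%N](ltn_predK s_gt1) ltnS leq_divRL ?absz_gt0 // => le_s.
have s1_gt0 : (0 < s.-1)%N by rewrite -ltnS (ltn_predK s_gt1).
by rewrite leq_divRL // mulnC.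
Qed.

Lemma card_U_le (b : 'rV[int]_d) (s : nat) :
  (1 < s)%N -> (#|` U X b s| <=
    if [forall i, `|b 0%R i| <= (N i).-1 %/ s.-1]%N then #|` X| else 0)%N.
Proof.
move=> s_gt1; case: ifPn => [_ | /forallPn[i b_out]].
  by apply/fsubset_leq_card/fsubsetP => x; rewrite in_U => /andP[].
rewrite leqn0 cardfs_eq0; apply/eqP/fsetP => x; rewrite inE.
by apply/negP => /(U_coord_le i s_gt1); apply/negP.
Qed.

End CongruenceClass.

Lemma box_width_le (R : numFieldType) (n s : nat) : (1 < s)%N ->
  ((n.-1 %/ s.-1).*2.+1)%:R <= 4 * n%:R / s%:R + 1 :> R.
Proof.
move=> s_gt1; have s_gt0 := ltnW s_gt1.
rewrite -addn1 natrD lerD2r ler_pdivlMr ?ltr0n // -!natrM ler_nat.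
have := leq_divM n.-1 s.-1; rewrite -!subn1 -mul2n; nia.
Qed.

Theorem lemma2p3 (d : nat) (N : 'I_d -> nat) (hN : forall i, (0 < N i)%N)
  (s : nat) (hs : (2 <= s)%N) (X : {fset 'rV[int]_d}) (hX : in_box N X)
  (B : {fset 'rV[int]_d}) (hB : 0 \notin B) :
  ((\sum_(b <- B) #|` U X b s|)%N%:R : rat)
    <= (#|` X|)%:R * \prod_(i < d) (4 * (N i)%:R / s%:R + 1).
Proof.
pose M i := ((N i).-1 %/ s.-1)%N.
pose small (b : 'rV[int]_d) := [forall i, `|b 0%R i| <= M i]%N.
have sum_le : (\sum_(b <- B) #|` U X b s| <= count small B * #|` X|)%N.
  rewrite -sum1_count big_distrl [leqRHS]big_mkcond /=.
  by apply: leq_sum => b _; rewrite mul1n; exact: card_U_le.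
have count_le : (count small B <= \prod_(i < d) (M i).*2.+1)%N.
  rewrite -size_filter; apply: uniq_box_size.
    exact: filter_uniq (fset_uniq B).
  by move=> b; rewrite mem_filter => /andP[/forallP].
apply: le_trans (_ : (#|` X| * \prod_(i < d) (M i).*2.+1)%N%:R <= _).
  by rewrite ler_nat mulnC (leq_trans sum_le) ?leq_mul2r ?count_le ?orbT.
rewrite natrM natr_prod ler_wpM2l // ler_prod // => i _.
by rewrite ler0n box_width_le.
Qed.
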